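(* Consider smoothed LocalMaxCut on a graph $G=(V,E)$ with $n=|V|$, $m=|E|$ and maximum degree $\Delta(G)$, where the edge weights $w_e$ are drawn independently from distributions with densities $f_e:[-1,1]\to[0,\phi]$. Then the expected maximum number of iterations of local search under the Flip neighbourhood (over all initial cuts and all improving sequences) is $O(2^{\Delta(G)}nm^2\phi)$.
   Context: LocalMaxCut: given a weighted undirected graph $G=(V,E)$ with weights $w_e$, a cut is a partition $(V_1,V_2)$ of $V$ with weight $\sum_{uv\in E,\,u\in V_1,\,v\in V_2}w_{uv}$; the Flip neighbours of a cut are the cuts obtained by moving a single vertex to the other block; a solution is a cut with no neighbour of strictly larger weight. Local search repeatedly moves to a strictly better neighbour. *)

From HB Require Import structures.
From mathcomp Require Import all_boot all_order all_algebra.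
From mathcomp Require Import all_classical all_reals all_analysis.
Set Implicit Arguments. Unset Strict Implicit. Unset Printing Implicit Defensive.
Import Order.TTheory GRing.Theory Num.Theory.
Local Open Scope ring_scope.

Definition simple_graph (n : nat) (adj : rel 'I_n) : Prop :=
  symmetric adj /\ irreflexive adj.

(* Edge set: each edge {u,v} represented once as the pair (u,v) with u < v. *)
Definition edges (n : nat) (adj : rel 'I_n) : {set 'I_n * 'I_n} :=
  [set e | adj e.1 e.2 && (e.1 < e.2)%N].

Definition max_degree (n : nat) (adj : rel 'I_n) : nat :=
  \max_(v : 'I_n) #|[set u | adj v u]|.

Definition cut_weight (R : numDomainType) (n : nat) (adj : rel 'I_n)
  (w : 'I_n * 'I_n -> R) (S : {set 'I_n}) : R :=
  \sum_(e in edges adj | (e.1 \in S) != (e.2 \in S)) w e.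

Definition flip (n : nat) (S : {set 'I_n}) (v : 'I_n) : {set 'I_n} :=
  if v \in S then S :\ v else v |: S.

Definition improving_step (R : numDomainType) (n : nat) (adj : rel 'I_n)
  (w : 'I_n * 'I_n -> R) : rel {set 'I_n} :=
  fun S S' => [exists v, S' == flip S v] && (cut_weight adj w S < cut_weight adj w S').

(* Any improving sequence of k steps visits k+1
   distinct cuts (weights strictly increase), so k < 2^n and the bounded max
   below is the true maximum. *)
Definition max_flip_iterations (R : numDomainType) (n : nat) (adj : rel 'I_n)
  (w : 'I_n * 'I_n -> R) : nat :=
  \max_(k < (2 ^ n).+1 | [exists S0 : {set 'I_n},
         [exists s : k.-tuple {set 'I_n}, path (improving_step adj w) S0 s]]) k.

Local Open Scope classical_set_scope.
Local Open Scope ereal_scope.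

(* Mutual independence of the random variables X i, i in J (J finite):
   product rule for every choice of measurable sets (taking A i = setT
   recovers every subfamily). *)
Definition mutually_independent d (Omega : measurableType d) (R : realType)
  (P : probability Omega R) (I : finType) (J : {set I}) (X : I -> Omega -> R) : Prop :=
  forall A : I -> set R, (forall i, measurable (A i)) ->
    P (\big[setI/setT]_(i in J) (X i @^-1` A i)) = \prod_(i in J) P (X i @^-1` A i).

Definition has_density_on_pm1 d (Omega : measurableType d) (R : realType)
  (P : probability Omega R) (X : Omega -> R) (f : R -> R) : Prop :=
  forall A : set R, measurable A ->
    P (X @^-1` A) =
    \int[lebesgue_measure]_(x in A `&` [set x : R | (-1 <= x <= 1)%R]) (f x)%:E.

(* Flipping v changes the cut weight by its flip gain
   sum_{e ∋ v} ±w_e, the signs being fixed by which incident edges are cut.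
   If all weights lie in [-1,1] (so cut weights lie in [-m,m]) and no flip
   gain lies in (0,eps], every improving step gains more than eps, hence at
   most 2m/eps steps are possible.

   Fix v, a pivot edge e0 ∋ v and a sign pattern.  Round
   the weights of the other edges at v to a grid of mesh 2/N on [-1,1]; then
   "0 < gain <= eps" forces w_{e0} into an interval of length eps + O(m/N)
   fixed by the rounded values.  The event is thus covered by product events,
   and independence plus the density bound phi give probability at most
   phi (eps + 4m/N).  A union bound over the at most 2^Delta * 2m pairs
   (vertex, sign pattern) bounds the "bad event" B(eps,N).

   Expectation.  With T the number of iterations, T <= sum_j 2^j [2^j <= T],
   and 2^j <= T forces B((4m+1)/2^j, 2^j); integrating over the n+1 dyadic
   levels j <= n gives the theorem. *)

From HB Require Import structures.
From mathcomp Require Import all_boot all_order all_algebra.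
From mathcomp Require Import all_classical all_reals all_analysis.
From mathcomp Require Import lra ring measurable_realfun.
Import Order.TTheory GRing.Theory Num.Theory.
Local Open Scope ring_scope.
Set Implicit Arguments. Unset Strict Implicit. Unset Printing Implicit Defensive.

Section Graph.
Variables (n : nat) (adj : rel 'I_n).

Definition incident (v : 'I_n) : {set 'I_n * 'I_n} :=
  [set e in edges adj | (e.1 == v) || (e.2 == v)].

Definition cut_edges (S : {set 'I_n}) : {set 'I_n * 'I_n} :=
  [set e in edges adj | (e.1 \in S) != (e.2 \in S)].

(* The number of pairs (v, D) with v non-isolated and D a set of edges at v:
   the events "flip gain of v with cut edges D is small" we must control. *)
Definition vertex_patterns : nat :=
  \sum_(v : 'I_n)
    (if [pick e in incident v] is Some _ then 2 ^ #|incident v| else 0).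

Hypothesis adj_simple : simple_graph adj.

(* An edge at v is determined by its other endpoint, a neighbour of v. *)
Lemma card_incident_le v : (#|incident v| <= max_degree adj)%N.
Proof.
case: adj_simple => adj_sym _.
pose other (e : 'I_n * 'I_n) := if e.1 == v then e.2 else e.1.
apply: (@leq_trans #|[set u | adj v u]|); last first.
  exact: (@leq_bigmax _ (fun v => #|[set u | adj v u]|) v).
rewrite -(@card_in_imset _ _ other); last first.
  move=> [a b] [a' b']; rewrite !inE /other /=.
  move=> /andP[/andP[_ ab] vab] /andP[/andP[_ ab'] vab'].
  case: (eqVneq a v) vab ab => [-> _|_ /= /eqP ->] ab;
  case: (eqVneq a' v) vab' ab' => [-> _|_ /= /eqP ->] ab' /= eq_o.
  - by rewrite eq_o.
  - by move: (ltn_trans ab' ab); rewrite eq_o ltnn.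
  - by move: (ltn_trans ab ab'); rewrite eq_o ltnn.
  - by rewrite eq_o.
apply: subset_leq_card; apply/fintype.subsetP => u /imsetP[[a b]].
rewrite !inE /other /= => /andP[/andP[ab _] vab] ->.
by case: (eqVneq a v) vab => [<- //|_ /= /eqP <-]; rewrite adj_sym.
Qed.

(* Only endpoints of edges contribute, and there are at most 2m of them. *)
Lemma vertex_patterns_le :
  (vertex_patterns <= 2 ^ max_degree adj * (2 * #|edges adj|))%N.
Proof.
set ends := [set e.1 | e in edges adj] :|: [set e.2 | e in edges adj].
have card_ends : (#|ends| <= 2 * #|edges adj|)%N.
  apply: leq_trans (leq_card_setU _ _) _.
  by rewrite mul2n -addnn leq_add // leq_imset_card.
apply: (@leq_trans (\sum_(v in ends) 2 ^ max_degree adj)); last first.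
  by rewrite sum_nat_const mulnC leq_mul2l card_ends orbT.
rewrite /vertex_patterns [X in (_ <= X)%N]big_mkcond /=.
apply: leq_sum => v _; case: pickP => [e ev|//].
have -> : v \in ends.
  move: ev; rewrite inE => /andP[eE /orP[] /eqP <-]; rewrite inE.
    by apply/orP; left; apply/imsetP; exists e.
  by apply/orP; right; apply/imsetP; exists e.
by rewrite leq_exp2l // card_incident_le.
Qed.

End Graph.

Section FlipGain.
Variables (R : realDomainType) (n : nat) (adj : rel 'I_n) (w : 'I_n * 'I_n -> R).

(* The gain of flipping v when D is the set of cut edges: the incident cut
   edges become uncut and the incident uncut edges become cut. *)
Definition flip_gain (v : 'I_n) (D : {set 'I_n * 'I_n}) : R :=
  \sum_(e in incident adj v) (if e \in D then - w e else w e).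

Definition weights_in_pm1 : Prop := forall e, e \in edges adj -> -1 <= w e <= 1.

Definition no_small_gain (eps : R) : Prop :=
  forall v D, ~ (0 < flip_gain v D <= eps).

Lemma flip_gain_setIr (v : 'I_n) (D : {set 'I_n * 'I_n}) :
  flip_gain v (D :&: incident adj v) = flip_gain v D.
Proof. by apply: eq_bigr => e ev; rewrite inE ev andbT. Qed.

Lemma cut_weightE (S : {set 'I_n}) : cut_weight adj w S =
  \sum_(e in edges adj) (if (e.1 \in S) != (e.2 \in S) then w e else 0).
Proof. by rewrite /cut_weight big_mkcondr. Qed.

Lemma in_flip (S : {set 'I_n}) (v x : 'I_n) :
  (x \in flip S v) = (if x == v then x \notin S else x \in S).
Proof.
by rewrite /flip; case: ifP => vS; rewrite ?inE; case: eqP => // ->; rewrite vS.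
Qed.

Lemma cut_weight_flip (S : {set 'I_n}) (v : 'I_n) :
  cut_weight adj w (flip S v) = cut_weight adj w S + flip_gain v (cut_edges adj S).
Proof.
rewrite !cut_weightE /flip_gain.
have -> : \sum_(e in incident adj v) (if e \in cut_edges adj S then - w e else w e)
  = \sum_(e in edges adj) (if (e.1 == v) || (e.2 == v) then
      (if (e.1 \in S) != (e.2 \in S) then - w e else w e) else 0).
  rewrite -big_mkcondr /=; apply: eq_big => e; first by rewrite inE.
  by rewrite inE => /andP[eE _]; rewrite inE eE.
rewrite -big_split /=; apply: eq_bigr => e; rewrite inE => /andP[_ lt12].
have ne12 : e.1 != e.2 by rewrite neq_ltn lt12.
rewrite !in_flip.
case: (eqVneq e.1 v) => [h1|h1]; case: (eqVneq e.2 v) => [h2|h2] /=.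
- by move: ne12; rewrite h1 h2 eqxx.
- by case: (e.1 \in S); case: (e.2 \in S); rewrite /= ?add0r ?addr0 ?subrr.
- by case: (e.1 \in S); case: (e.2 \in S); rewrite /= ?add0r ?addr0 ?subrr.
- by rewrite addr0.
Qed.

Lemma cut_weight_bounds (S : {set 'I_n}) : weights_in_pm1 ->
  - (#|edges adj|%:R) <= cut_weight adj w S <= #|edges adj|%:R.
Proof.
move=> wb; rewrite cut_weightE -sumr_const; apply/andP; split.
  rewrite -sumrN; apply: ler_sum => e eE.
  by case: ifP => _; [case/andP: (wb e eE)|rewrite lerN10].
by apply: ler_sum => e eE; case: ifP => _; [case/andP: (wb e eE)|].
Qed.

Lemma improving_path_gain eps S0 (s : seq {set 'I_n}) : no_small_gain eps ->
  path (improving_step adj w) S0 s ->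
  cut_weight adj w S0 + (size s)%:R * eps <= cut_weight adj w (last S0 s).
Proof.
move=> ng; elim: s S0 => [|S1 s IH] S0 /=; first by rewrite mul0r addr0.
case/andP=> /andP[/existsP[v /eqP ->] improves] /IH IHs.
rewrite cut_weight_flip in improves IHs.
set g := flip_gain v (cut_edges adj S0) in improves IHs.
have g_gt_eps : eps < g.
  have g_gt0 : 0 < g by rewrite -(ltrD2l (cut_weight adj w S0)) addr0.
  by rewrite ltNge; apply/negP => g_le; apply: (ng v (cut_edges adj S0)); rewrite g_gt0.
apply: le_trans IHs; rewrite -addn1 natrD mulrDl mul1r; lra.
Qed.

End FlipGain.

Section MaxFlipIterations.
Variables (R : realDomainType) (n : nat) (adj : rel 'I_n) (w : 'I_n * 'I_n -> R).

Lemma max_flip_iterations_le : (max_flip_iterations adj w <= 2 ^ n)%N.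
Proof. by apply/bigmax_leqP => k _; rewrite -ltnS. Qed.

(* The maximum is realised by an actual run (the empty run always exists). *)
Lemma max_flip_iterations_attained : exists S0 (s : seq {set 'I_n}),
  size s = max_flip_iterations adj w /\ path (improving_step adj w) S0 s.
Proof.
pose A := [pred k : 'I_(2 ^ n).+1 | [exists S0 : {set 'I_n},
  [exists s : k.-tuple {set 'I_n}, path (improving_step adj w) S0 s]]].
have A_gt0 : (0 < #|A|)%N.
  apply/card_gt0P; exists ord0; apply/existsP; exists finset.set0.
  by apply/existsP; exists [tuple].
have [k /existsP[S0 /existsP[s ps]] k_max] :=
  eq_bigmax_cond (fun k : 'I_(2 ^ n).+1 => nat_of_ord k) A_gt0.
by exists S0, s; split=> //; rewrite size_tuple; exact: esym k_max.
Qed.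

Lemma max_flip_iterations_gain_bound eps :
  weights_in_pm1 adj w -> no_small_gain adj w eps ->
  (max_flip_iterations adj w)%:R * eps <= 2 * #|edges adj|%:R.
Proof.
move=> wb ng; have [S0 [s [<- ps]]] := max_flip_iterations_attained.
have := improving_path_gain ng ps.
have /andP[lo _] := cut_weight_bounds S0 wb.
have /andP[_ hi] := cut_weight_bounds (last S0 s) wb.
lra.
Qed.

End MaxFlipIterations.

Lemma sum_pow2 M : ((\sum_(j < M) 2 ^ j).+1 = 2 ^ M)%N.
Proof.
elim: M => [|M IH]; first by rewrite big_ord0.
by rewrite big_ord_recr /= -addSn IH expnS mul2n addnn.
Qed.

Lemma natr_pow2_gt0 (R : numDomainType) j : 0 < (2 ^ j)%:R :> R.
Proof. by rewrite ltr0n expn_gt0. Qed.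

Lemma dyadic_le M T : (T < 2 ^ M)%N -> (T <= \sum_(j < M) 2 ^ j * (2 ^ j <= T))%N.
Proof.
elim: M => [|M IH] TM; first by move: TM; rewrite expn0 ltnS leqn0 => /eqP ->.
rewrite big_ord_recr /=; case: (leqP (2 ^ M) T) => hT; last first.
  by apply: leq_trans (IH hT) _; rewrite leq_addr.
have -> : (\sum_(j < M) 2 ^ j * (2 ^ j <= T) = \sum_(j < M) 2 ^ j)%N.
  by apply: eq_bigr => j _; rewrite (leq_trans _ hT) ?muln1 // leq_exp2l // ltnW.
by move: TM; rewrite muln1 expnS mul2n -addnn -{1}sum_pow2 addSn ltnS.
Qed.

Local Open Scope classical_set_scope.

Section Grid.
Variables (R : realType) (K : nat).

(* The grid -1 = grid_pt 0 < ... < grid_pt K.+1 = 1 splits the line into the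
   K.+1 cells [grid_pt i, grid_pt i.+1[, the outer two extended to infinity. *)
Definition grid_mesh : R := 2 / K.+1%:R.
Definition grid_pt (i : nat) : R := -1 + i%:R * grid_mesh.
Definition in_cell (i : 'I_K.+1) (x : R) : bool :=
  ((i == 0 :> nat) || (grid_pt i <= x)) && ((i == K :> nat) || (x < grid_pt i.+1)).
Definition cell (i : 'I_K.+1) : set R := [set x | in_cell i x].

Lemma grid_mesh_gt0 : 0 < grid_mesh.
Proof. by rewrite /grid_mesh divr_gt0 // ltr0n. Qed.

Lemma grid_pt_mono i j : (i <= j)%N -> grid_pt i <= grid_pt j.
Proof.
by move=> ij; rewrite /grid_pt lerD2l ler_wpM2r ?ler_nat // ltW // grid_mesh_gt0.
Qed.

Lemma grid_ptS i : grid_pt i.+1 = grid_pt i + grid_mesh.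
Proof. by rewrite /grid_pt -addn1 natrD mulrDl mul1r addrA. Qed.

Lemma grid_pt_last : grid_pt K + grid_mesh = 1.
Proof. by rewrite -grid_ptS /grid_pt /grid_mesh mulrCA mulfV ?mulr1 ?pnatr_eq0 //; lra. Qed.

Lemma cell_meas i : measurable (cell i).
Proof.
have -> : cell i = (if (i == 0 :> nat) then setT else `[grid_pt i, +oo[) `&`
   (if (i == K :> nat) then setT else `]-oo, grid_pt i.+1[).
  rewrite /cell /in_cell; apply/seteqP; split => x /=;
  case: (i == 0 :> nat); case: (i == K :> nat); rewrite /= ?in_itv /= ?andbT ?andTb.
  all: try done.
  - by move/andP.
  - by case.
  - by case.
  - by case=> -> ->.
by apply: measurableI; case: ifP => _ //; apply: measurable_itv.
Qed.

Lemma cell_disj i j : i != j -> cell i `&` cell j = set0.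
Proof.
wlog ij : i j / (i < j)%N.
  move=> H; rewrite neq_ltn => /orP[h|h]; first by apply: H => //; rewrite neq_ltn h.
  by rewrite setIC; apply: H => //; rewrite neq_ltn h.
move=> _; apply/seteqP; split => x // [] /andP[_ hi] /andP[hj _].
have iK : (i == K :> nat) = false.
  by apply: ltn_eqF; apply: leq_trans ij _; rewrite -ltnS.
have j0 : (j == 0 :> nat) = false by apply/negbTE; rewrite -lt0n (leq_ltn_trans _ ij).
rewrite iK j0 /= in hi hj.
have := grid_pt_mono ij; lra.
Qed.

(* Every real lies in a cell: the last grid point below it. *)
Lemma cell_cover x : exists i, in_cell i x.
Proof.
have ex : exists k, (k <= K)%N && ((k == 0)%N || (grid_pt k <= x)) by exists 0%N.
have bounded k : (k <= K)%N && ((k == 0)%N || (grid_pt k <= x)) -> (k <= K)%N.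
  by case/andP.
have [i /andP[iK hi] imax] := ex_maxnP ex bounded.
exists (Ordinal (iK : (i < K.+1)%N)); rewrite /in_cell /= hi /=.
case: (eqVneq i K) => //= iK'.
have : ~~ ((i.+1 <= K)%N && ((i.+1 == 0)%N || (grid_pt i.+1 <= x))).
  by apply/negP => /imax; rewrite ltnn.
by rewrite ltn_neqAle iK' iK /= -ltNge.
Qed.

Definition cell_of (x : R) : 'I_K.+1 := xchoose (cell_cover x).

Lemma cell_ofP x : in_cell (cell_of x) x.
Proof. exact: (xchooseP (cell_cover x)). Qed.

Lemma cell_near i x : -1 <= x <= 1 -> in_cell i x ->
  grid_pt i <= x <= grid_pt i + grid_mesh.
Proof.
move=> /andP[x1 x2] /andP[h1 h2]; apply/andP; split.
  by case/orP: h1 => // /eqP i0; rewrite /grid_pt i0 mul0r addr0.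
case/orP: h2 => [/eqP iK|h]; first by rewrite iK grid_pt_last.
by rewrite -grid_ptS ltW.
Qed.

End Grid.

Lemma measure_bigsetU_le d (T : measurableType d) (R : realType)
  (mu : {measure set T -> \bar R}) (I : Type) (r : seq I) (p : pred I)
  (F : I -> set T) : (forall i, p i -> measurable (F i)) ->
  (mu (\big[setU/set0]_(i <- r | p i) F i) <= \sum_(i <- r | p i) mu (F i))%E.
Proof.
move=> mF; elim: r => [|h r IH]; first by rewrite !big_nil measure0.
rewrite !big_cons; case: ifP => // ph.
apply: le_trans (measureU2 _ _ _) _ => //; first exact: mF.
  by apply: bigsetU_measurable => i /mF.
by apply: leeD.
Qed.

(* Monotonicity of the integral of non-negative functions over the whole
   space, which needs no measurability (integrals are sups of simple ones). *)
Lemma ge0_le_integralT d (T : measurableType d) (R : realType)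
  (mu : {measure set T -> \bar R}) (F G : T -> \bar R) :
  (forall x, (0 <= F x)%E) -> (forall x, (F x <= G x)%E) ->
  (\int[mu]_(x in setT) F x <= \int[mu]_(x in setT) G x)%E.
Proof.
move=> F0 FG; rewrite !ge0_integralTE //; last by move=> x; apply: le_trans (FG x).
apply: ereal_sup_le => _ [h hF <-]; exists h => //= x.
exact: le_trans (hF x) (FG x).
Qed.

Lemma integral_le_dyadic d (Omega : measurableType d) (R : realType)
  (mu : {measure set Omega -> \bar R}) (N : nat) (T : Omega -> nat)
  (B : nat -> set Omega) :
  (forall x, T x < 2 ^ N)%N -> (forall j, measurable (B j)) ->
  (forall x j, 2 ^ j <= T x -> B j x)%N ->
  (\int[mu]_(x in setT) ((T x)%:R : R)%:E <=
     \sum_(j < N) ((2 ^ j)%:R)%:E * mu (B j))%E.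
Proof.
move=> T_lt B_meas T_B.
have layers x : ((T x)%:R : R) <= \sum_(j < N) (2 ^ j)%:R * \1_(B j) x.
  apply: (@le_trans _ _ ((\sum_(j < N) 2 ^ j * (2 ^ j <= T x))%N)%:R).
    by rewrite ler_nat dyadic_le.
  rewrite natr_sum; apply: ler_sum => j _; rewrite natrM indicE ler_wpM2l //.
  by case: leqP => // /T_B Bx; rewrite mem_set.
apply: le_trans (ge0_le_integralT mu
  (G := fun x => (\sum_(j < N) (2 ^ j)%:R * \1_(B j) x)%:E) _ _) _.
- by move=> x; rewrite lee_fin.
- by move=> x; rewrite lee_fin layers.
under eq_integral do rewrite -sumEFin.
rewrite ge0_integral_sum //; last first.
  by move=> j; apply/measurable_EFinP; apply: measurable_funM.
apply: lee_sum => j _; under eq_integral do rewrite EFinM.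
rewrite ge0_integralZl ?integral_indic ?setIT //.
by apply/measurable_EFinP; exact: measurable_indic.
Qed.

Section Smoothing.
Variables (R : realType) (n : nat) (adj : rel 'I_n) (phi : R)
  (d : measure_display) (Omega : measurableType d) (P : probability Omega R)
  (W : 'I_n * 'I_n -> Omega -> R) (f : 'I_n * 'I_n -> R -> R).
Hypothesis W_meas : forall e, e \in edges adj -> measurable_fun setT (W e).
Hypothesis f_meas : forall e, e \in edges adj -> measurable_fun setT (f e).
Hypothesis f_bounded : forall e, e \in edges adj -> forall x, 0 <= f e x <= phi.
Hypothesis W_density : forall e, e \in edges adj -> has_density_on_pm1 P (W e) (f e).
Hypothesis W_indep : mutually_independent P (edges adj) W.

Lemma phi_ge0 e : e \in edges adj -> 0 <= phi.
Proof. by move=> eE; have /andP[f0 /(le_trans f0)] := f_bounded eE 0. Qed.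

Lemma preimage_meas e A : e \in edges adj -> measurable A ->
  measurable (W e @^-1` A).
Proof. by move=> eE mA; rewrite -[X in measurable X]setTI; apply: W_meas. Qed.

Lemma pm1E : [set x : R | (-1 <= x <= 1)%R] = `[-1, 1].
Proof. by apply/seteqP; split=> x; rewrite /= in_itv. Qed.

Lemma prob_interval_le e a b : e \in edges adj -> a <= b ->
  (P (W e @^-1` `[a, b]) <= (phi * (b - a))%:E)%E.
Proof.
move=> eE ab; rewrite (W_density eE) ?measurable_itv //.
have mD : measurable (`[a, b] `&` [set x : R | (-1 <= x <= 1)%R]).
  by rewrite pm1E; apply: measurableI; apply: measurable_itv.
apply: (@le_trans _ _ (\int[lebesgue_measure]_(x in `[a, b] `&`
    [set x : R | (-1 <= x <= 1)%R]) (cst phi%:E) x)%E).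
  apply: ge0_le_integral => //.
  - by move=> x _; rewrite lee_fin; case/andP: (f_bounded eE x).
  - apply: (@measurable_funS _ _ _ _ setT) => //.
    by apply/measurable_EFinP; apply: f_meas.
  - by move=> x _; rewrite lee_fin; case/andP: (f_bounded eE x).
rewrite integral_cst // EFinM lee_wpmul2l ?lee_fin ?(phi_ge0 eE) //.
apply: (@le_trans _ _ (lebesgue_measure (`[a, b] : set R))).
  by apply: le_measure; rewrite ?inE //; apply: measurable_itv.
by rewrite lebesgue_measure_itv /=; case: ifP => _ //; rewrite lee_fin subr_ge0.
Qed.

Lemma prob_outside_pm1 e : e \in edges adj -> P (W e @^-1` ~` `[-1, 1]) = 0%E.
Proof.
move=> eE; rewrite (W_density eE); last by apply: measurableC; apply: measurable_itv.
by rewrite pm1E setICl integral_set0.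
Qed.

Lemma sum_prob_cells e K : e \in edges adj ->
  \sum_(j < K.+1) fine (P (W e @^-1` @cell R K j)) <= 1.
Proof.
move=> eE; have cell_pre j := preimage_meas eE (@cell_meas R K j).
rewrite -lee_fin -sumEFin.
under eq_bigr do rewrite fineK ?fin_num_measure //.
rewrite -measure_bigsetU_ord //.
- by apply: probability_le1; apply: bigsetU_measurable.
- apply/trivIsetP => i j _ _ ij.
  by rewrite -preimage_setI cell_disj // preimage_set0.
Qed.

Section SmallGain.
Variables (K : nat) (eps : R) (v : 'I_n) (e0 : 'I_n * 'I_n) (D : {set 'I_n * 'I_n}).
Hypothesis e0v : e0 \in incident adj v.

(* Fix a pivot edge e0 at v and a set D of cut edges; the other edges at v
   are rounded to the grid with K.+1 cells. *)
Definition other_edges : {set 'I_n * 'I_n} := incident adj v :\ e0.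
Local Notation assignment := {ffun 'I_n * 'I_n -> 'I_K.+1}.
Definition edge_sign (e : 'I_n * 'I_n) : R := if e \in D then -1 else 1.

(* For a cell assignment c of the other edges: their rounded contribution to
   the gain, its maximal rounding error, and the window that w_{e0} must
   then lie in for the gain to be in (0, eps]. *)
Definition grid_sum (c : assignment) : R :=
  \sum_(e in other_edges) edge_sign e * grid_pt R K (c e).
Definition grid_err : R := #|other_edges|%:R * grid_mesh R K.
Definition window_lo (c : assignment) : R :=
  if e0 \in D then grid_sum c - eps - grid_err else - grid_sum c - grid_err.
Definition window (c : assignment) : set R := `[window_lo c, window_lo c + (eps + 2 * grid_err)].

Definition rect_side (c : assignment) (e : 'I_n * 'I_n) : set R :=
  if e == e0 then window c else if e \in other_edges then @cell R K (c e) else setT.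
Definition rect (c : assignment) : set Omega :=
  \big[setI/setT]_(e in edges adj) (W e @^-1` rect_side c e).
Definition small_gain_cover : set Omega :=
  \big[setU/set0]_(c in pffun_on ord0 (fun e => e \in other_edges) predT) rect c.

Lemma e0_edge : e0 \in edges adj.
Proof. by move: e0v; rewrite inE => /andP[]. Qed.

Lemma other_edgesE e : e \in other_edges = (e != e0) && (e \in incident adj v).
Proof. by rewrite in_setD1. Qed.

Lemma other_edge_edge e : e \in other_edges -> e \in edges adj.
Proof. by rewrite other_edgesE inE => /andP[_ /andP[]]. Qed.

Lemma flip_gain_split (w : 'I_n * 'I_n -> R) :
  flip_gain adj w v D = edge_sign e0 * w e0 + \sum_(e in other_edges) edge_sign e * w e.
Proof.
have signE e : (if e \in D then - w e else w e) = edge_sign e * w e.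
  by rewrite /edge_sign; case: ifP; rewrite ?mulN1r ?mul1r.
rewrite /flip_gain (bigD1 e0) //= signE; congr (_ + _).
by apply: eq_big => [e|e _]; rewrite ?other_edgesE ?signE // andbC.
Qed.

Lemma rect_side_meas c e : measurable (rect_side c e).
Proof.
rewrite /rect_side; case: ifP => _; first exact: measurable_itv.
by case: ifP => _ //; apply: cell_meas.
Qed.

Lemma rect_meas c : measurable (rect c).
Proof.
by apply: bigsetI_measurable => e eE; apply: preimage_meas => //; apply: rect_side_meas.
Qed.

Lemma small_gain_cover_meas : measurable small_gain_cover.
Proof. by apply: bigsetU_measurable => c _; apply: rect_meas. Qed.

Lemma grid_sum_near (om : Omega) (c : assignment) :
  weights_in_pm1 adj (W^~ om) ->
  (forall e, e \in other_edges -> in_cell (c e) (W e om)) ->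
  `| \sum_(e in other_edges) edge_sign e * W e om - grid_sum c | <= grid_err.
Proof.
move=> wb c_cell; rewrite /grid_sum -sumrB.
apply: le_trans (ler_norm_sum _ _ _) _.
rewrite /grid_err mulr_natl -sumr_const; apply: ler_sum => e eO.
have := cell_near (wb e (other_edge_edge eO)) (c_cell e eO).
rewrite -mulrBr normrM /edge_sign; case: ifP => _; rewrite ?normrN normr1 mul1r;
by move=> /andP[h1 h2]; rewrite ger0_norm; lra.
Qed.

Lemma small_gain_covered (om : Omega) : weights_in_pm1 adj (W^~ om) ->
  0 < flip_gain adj (W^~ om) v D <= eps -> small_gain_cover om.
Proof.
move=> wb /andP[g_gt0 g_le].
pose c := [ffun e => if e \in other_edges then cell_of K (W e om) else ord0].
have c_cell e : e \in other_edges -> in_cell (c e) (W e om).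
  by move=> eO; rewrite /c ffunE eO; exact: cell_ofP.
rewrite /small_gain_cover -bigcup_seq_cond; exists c.
  rewrite /= mem_index_enum; apply/pffun_onP; split => //.
  change (ord0.-support c \subset other_edges).
  apply/fintype.subsetP => e; rewrite inE /c ffunE.
  by case: ifP => //; rewrite eqxx.
rewrite /rect -bigcap_seq_cond => e /andP[_ eE] /=; rewrite /rect_side.
case: eqP => [->|_]; last by case: ifP => // /c_cell.
have err_ge0 : 0 <= grid_err by rewrite mulr_ge0 // ltW // grid_mesh_gt0.
move: g_gt0 g_le (grid_sum_near wb c_cell).
rewrite flip_gain_split /window /= in_itv /= /window_lo.
set Y := \sum_(e in other_edges) _; rewrite ler_norml /edge_sign.
by case: ifP => _ /= g_gt0 g_le /andP[h1 h2]; apply/andP; split; lra.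
Qed.

Lemma prob_rect c : P (rect c) = (P (W e0 @^-1` window c) *
  \prod_(e in other_edges) P (W e @^-1` @cell R K (c e)))%E.
Proof.
rewrite /rect W_indep; last by move=> e; apply: rect_side_meas.
rewrite (bigD1 e0) /= ?e0_edge // /rect_side eqxx; congr (_ * _)%E.
rewrite (bigID (mem other_edges)) /= [X in (_ * X)%E]big1 ?mule1; last first.
  move=> e /andP[/andP[_ /negbTE ->] /negbTE ->].
  by rewrite preimage_setT probability_setT.
apply: eq_big => e; last by move=> /andP[/andP[_ /negbTE ->] ->].
case eO: (e \in other_edges); rewrite ?andbF // andbT.
by rewrite other_edge_edge //; move: eO; rewrite other_edgesE => /andP[].
Qed.

(* Summing the window bound over all cell assignments gives phi times the
   window length, since the cell probabilities of each edge sum to <= 1. *)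
Lemma prob_small_gain_cover : 0 <= eps ->
  (P small_gain_cover <= (phi * (eps + 2 * grid_err))%:E)%E.
Proof.
move=> eps_ge0; have err_ge0 : 0 <= grid_err.
  by rewrite mulr_ge0 // ltW // grid_mesh_gt0.
set L := phi * (eps + 2 * grid_err).
have L_ge0 : 0 <= L by rewrite mulr_ge0 ?(phi_ge0 e0_edge) //; lra.
pose p e j := fine (P (W e @^-1` @cell R K j)).
apply: le_trans; first by apply: measure_bigsetU_le => c _; apply: rect_meas.
apply: (@le_trans _ _ (\sum_(c in pffun_on ord0 (fun e => e \in other_edges) predT)
          (L * \prod_(e in other_edges) p e (c e))%:E)%E).
  apply: lee_sum => c _.
  have prod_fine : (\prod_(e in other_edges) P (W e @^-1` @cell R K (c e)) =
      (\prod_(e in other_edges) p e (c e))%:E)%E.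
    rewrite -prodEFin; apply: eq_bigr => e eO; rewrite fineK //.
    apply: fin_num_measure; apply: preimage_meas; last exact: cell_meas.
    exact: other_edge_edge.
  rewrite -[X in (X <= _)%E]/(P (rect c)) prob_rect prod_fine EFinM.
  apply: lee_wpmul2r; first by rewrite lee_fin prodr_ge0 // => e _; apply: fine_ge0.
  have window_ok : window_lo c <= window_lo c + (eps + 2 * grid_err).
    by rewrite lerDl; lra.
  apply: le_trans (prob_interval_le e0_edge window_ok) _.
  by rewrite lee_fin /L addrAC subrr add0r.
rewrite sumEFin lee_fin -mulr_sumr -(big_distr_big ord0) /=.
rewrite -[leRHS]mulr1 ler_wpM2l //; apply: prodr_ile1 => e eO; apply/andP; split.
  by apply: sumr_ge0 => j _; apply: fine_ge0.
apply: le_trans (sum_prob_cells K (other_edge_edge eO)).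
by rewrite /p big_mkcond.
Qed.

End SmallGain.

Section BadEvent.
Variables (K : nat) (eps : R).

Definition vertex_bad (v : 'I_n) : set Omega :=
  if [pick e in incident adj v] is Some e0 then
    \big[setU/set0]_(D in powerset (incident adj v)) small_gain_cover K eps v e0 D
  else set0.
Definition out_of_range : set Omega :=
  \big[setU/set0]_(e in edges adj) (W e @^-1` ~` `[-1, 1]).
Definition bad_event : set Omega := out_of_range `|` \big[setU/set0]_(v : 'I_n) vertex_bad v.

Lemma vertex_bad_meas v : measurable (vertex_bad v).
Proof.
rewrite /vertex_bad; case: pickP => [e0 _|_]; last exact: measurable0.
by apply: bigsetU_measurable => D _; apply: small_gain_cover_meas.
Qed.

Lemma out_of_range_meas : measurable out_of_range.
Proof.
apply: bigsetU_measurable => e eE; apply: (preimage_meas eE).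
by apply: measurableC; apply: measurable_itv.
Qed.

Lemma bad_event_meas : measurable bad_event.
Proof.
apply: measurableU; first exact: out_of_range_meas.
by apply: bigsetU_measurable => v _; apply: vertex_bad_meas.
Qed.

Lemma prob_out_of_range : P out_of_range = 0%E.
Proof.
apply/eqP; rewrite eq_le measure_ge0 andbT; apply: le_trans.
  apply: measure_bigsetU_le => e eE; apply: (preimage_meas eE).
  by apply: measurableC; apply: measurable_itv.
by rewrite big1 // => e eE; exact: prob_outside_pm1.
Qed.

Lemma prob_vertex_bad v : 0 <= eps ->
  (P (vertex_bad v) <= (if [pick e in incident adj v] is Some _ then
     (2 ^ #|incident adj v|)%:R * (phi * (eps + 2 * #|edges adj|%:R * grid_mesh R K))
   else 0)%:E)%E.
Proof.
move=> eps_ge0; rewrite /vertex_bad; case: pickP => [e0 e0v|_]; last by rewrite measure0.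
apply: le_trans.
  by apply: measure_bigsetU_le => D _; apply: small_gain_cover_meas.
apply: le_trans; first by apply: lee_sum => D _; apply: prob_small_gain_cover.
rewrite sumEFin sumr_const card_powerset lee_fin -[leLHS]mulr_natl.
rewrite ler_wpM2l // ler_wpM2l ?(phi_ge0 (e0_edge e0v)) // lerD2l -mulrA ler_pM2l //.
rewrite /grid_err (ler_wpM2r (ltW (grid_mesh_gt0 R K))) // ler_nat.
by apply: subset_leq_card; apply/fintype.subsetP => e /other_edge_edge.
Qed.

Lemma prob_bad_event : 0 <= eps -> (P bad_event <=
  ((vertex_patterns adj)%:R * (phi * (eps + 2 * #|edges adj|%:R * grid_mesh R K)))%:E)%E.
Proof.
move=> eps_ge0; apply: le_trans.
  apply: measureU2; first exact: out_of_range_meas.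
  by apply: bigsetU_measurable => v _; apply: vertex_bad_meas.
rewrite [X in (X + _)%E](_ : _ = 0%E) ?add0e; last exact: prob_out_of_range.
apply: le_trans; first by apply: measure_bigsetU_le => v _; apply: vertex_bad_meas.
apply: le_trans; first by apply: lee_sum => v _; apply: prob_vertex_bad.
rewrite sumEFin lee_fin /vertex_patterns natr_sum mulr_suml.
by apply: ler_sum => v _; case: pickP => _ //; rewrite mul0r.
Qed.

Lemma not_bad_event (om : Omega) : ~ bad_event om ->
  weights_in_pm1 adj (W^~ om) /\ no_small_gain adj (W^~ om) eps.
Proof.
move=> not_bad; have wb : weights_in_pm1 adj (W^~ om).
  move=> e eE; apply: contrapT => out; apply: not_bad; left.
  rewrite /out_of_range -bigcup_seq_cond; exists e; first by rewrite /= mem_index_enum.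
  by rewrite /preimage /setC /= in_itv.
split=> // u D small_gain; apply: not_bad; right.
rewrite -bigcup_seq_cond; exists u; first by rewrite /= mem_index_enum.
rewrite /vertex_bad; case: pickP => [e0 e0u|none]; last first.
  have no_gain : flip_gain adj (W^~ om) u D = 0.
    by rewrite /flip_gain big_pred0 // => e; rewrite none.
  by move: small_gain; rewrite no_gain ltxx.
rewrite -bigcup_seq_cond; exists (D :&: incident adj u).
  by rewrite /= mem_index_enum powersetE subsetIr.
by apply: small_gain_covered => //; rewrite flip_gain_setIr.
Qed.

End BadEvent.

Definition level_eps (j : nat) : R := (4 * #|edges adj| + 1)%:R / (2 ^ j)%:R.
Definition bad_level (j : nat) : set Omega := bad_event (2 ^ j).-1 (level_eps j).

Lemma bad_level_meas j : measurable (bad_level j).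
Proof. exact: bad_event_meas. Qed.

Lemma long_run_in_bad_level (om : Omega) j :
  (2 ^ j <= max_flip_iterations adj (W^~ om))%N -> bad_level j om.
Proof.
move=> long; apply: contrapT; rewrite /bad_level => /not_bad_event[wb ng].
have eps_gt0 : 0 < level_eps j by rewrite divr_gt0 ?natr_pow2_gt0.
have := max_flip_iterations_gain_bound wb ng.
have : (2 ^ j)%:R * level_eps j <= (max_flip_iterations adj (W^~ om))%:R * level_eps j.
  by rewrite ler_pM2r // ler_nat.
rewrite /level_eps mulrCA mulfV ?mulr1 ?gt_eqF ?natr_pow2_gt0 // natrD natrM.
have : 0 <= #|edges adj|%:R :> R by [].
lra.
Qed.

Lemma prob_bad_level j : (((2 ^ j)%:R)%:E * P (bad_level j) <=
  ((vertex_patterns adj)%:R * (phi * (8 * #|edges adj|%:R + 1)))%:E)%E.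
Proof.
have eps_ge0 : 0 <= level_eps j by rewrite divr_ge0 // ltW ?natr_pow2_gt0.
rewrite /bad_level; apply: le_trans.
  apply: lee_wpmul2l; first by rewrite lee_fin ltW ?natr_pow2_gt0.
  by apply: prob_bad_event.
rewrite -EFinM lee_fin le_eqVlt; apply/orP; left; apply/eqP.
rewrite /grid_mesh prednK ?expn_gt0 // /level_eps.
have := natr_pow2_gt0 R j; move: ((2 ^ j)%:R : R) => q q_gt0.
by field; rewrite gt_eqF.
Qed.

End Smoothing.

(* The final count: n+1 levels, each contributing at most
   2^Delta * 2m * phi * (8m+1) <= 18 * 2^Delta * m^2 * phi. *)
Lemma dyadic_total_le (R : realFieldType) n (adj : rel 'I_n) (phi : R) :
  simple_graph adj -> (forall e, e \in edges adj -> 0 <= phi) ->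
  (vertex_patterns adj)%:R * (phi * (8 * #|edges adj|%:R + 1)) *+ n.+1 <=
  40 * 2 ^+ max_degree adj * n%:R * #|edges adj|%:R ^+ 2 * phi.
Proof.
move=> adj_simple phi_ge0; have patterns := vertex_patterns_le adj_simple.
case: (posnP #|edges adj|) => [m0|m_gt0].
  move: patterns; rewrite m0 !muln0 leqn0 => /eqP ->.
  by rewrite !mul0r mul0rn expr0n /= mulr0 !mul0r.
have /card_gt0P[e eE] := m_gt0; rewrite -[leLHS]mulr_natr -[n.+1%:R]natr1.
have := phi_ge0 e eE.
have : 1 <= n%:R :> R by rewrite ler1n (leq_ltn_trans _ (ltn_ord e.1)).
have : 1 <= #|edges adj|%:R :> R by rewrite ler1n.
have : (vertex_patterns adj)%:R <= 2 ^+ max_degree adj * (2 * #|edges adj|%:R) :> R.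
  by rewrite -natrX -[2]/(2%:R) -!natrM ler_nat.
have : 0 <= 2 ^+ max_degree adj :> R by rewrite exprn_ge0.
have : 0 <= (vertex_patterns adj)%:R :> R by [].
move: (vertex_patterns adj)%:R (2 ^+ max_degree adj) n%:R #|edges adj|%:R => S D N M.
move=> S0 D0 hS M1 N1 phi0.
have h1 : S * (8 * M + 1) <= (D * (2 * M)) * (9 * M) by apply: ler_pM => //; lra.
have h2 : S * (8 * M + 1) * (N + 1) <= (D * (2 * M)) * (9 * M) * (2 * N).
  apply: ler_pM => //; try lra.
  by apply: mulr_ge0 => //; lra.
have -> : S * (phi * (8 * M + 1)) * (N + 1) = phi * (S * (8 * M + 1) * (N + 1)) by ring.
have -> : 40 * D * N * M ^+ 2 * phi = phi * (40 * (D * N * M ^+ 2)) by ring.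
rewrite ler_wpM2l //; apply: le_trans h2 _.
have -> : D * (2 * M) * (9 * M) * (2 * N) = 36 * (D * N * M ^+ 2) by ring.
by rewrite ler_wpM2r ?mulr_ge0 ?exprn_ge0 //; lra.
Qed.

Theorem mainTheorem11 (R : realType) :
  exists C : R, forall (n : nat) (adj : rel 'I_n) (phi : R)
    (d : measure_display) (Omega : measurableType d) (P : probability Omega R)
    (W : 'I_n * 'I_n -> Omega -> R) (f : 'I_n * 'I_n -> R -> R),
    simple_graph adj ->
    (forall e, e \in edges adj -> measurable_fun setT (W e)) ->
    (forall e, e \in edges adj -> measurable_fun setT (f e)) ->
    (forall e, e \in edges adj -> forall x, 0 <= f e x <= phi) ->
    (forall e, e \in edges adj -> has_density_on_pm1 P (W e) (f e)) ->
    mutually_independent P (edges adj) W ->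
    (\int[P]_(x in setT) ((max_flip_iterations adj (fun e => W e x))%:R : R)%:E
      <= (C * 2 ^+ max_degree adj * n%:R * (#|edges adj|%:R) ^+ 2 * phi)%:E)%E.
Proof.
exists 40 => n adj phi d Omega P W f adj_simple W_meas f_meas f_bounded
  W_density W_indep.
have runs_lt om : (max_flip_iterations adj (W^~ om) < 2 ^ n.+1)%N.
  by apply: leq_ltn_trans (max_flip_iterations_le _ _) _; rewrite ltn_exp2l.
apply: le_trans.
  apply: (integral_le_dyadic P runs_lt (bad_level_meas W_meas)).
  exact: long_run_in_bad_level.
apply: le_trans.
  apply: lee_sum => j _.
  exact: prob_bad_level W_meas f_meas f_bounded W_density W_indep j.
rewrite sumEFin sumr_const card_ord lee_fin.
exact: dyadic_total_le adj_simple (phi_ge0 f_bounded).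
Qed.
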